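(* Let $l$ be a positive integer and let $G_l$ be the graph obtained by identifying a vertex of the complete graph $K_{l+2}$ with a vertex of the Cartesian product $P_{l+1}\times P_2$. Then $k(G_l)=1$ and $p(G_l)=l$.
   Context: All graphs are finite and simple. $P_n$ is the path on $n$ vertices; the Cartesian product $G_1\times G_2$ has vertex set $V(G_1)\times V(G_2)$, with $(u_1,u_2)$ adjacent to $(v_1,v_2)$ iff either $u_1=v_1$ and $u_2v_2\in E(G_2)$, or $u_2=v_2$ and $u_1v_1\in E(G_1)$. For an acyclic digraph $D$, the competition graph $C(D)$ is the graph on $V(D)$ in which distinct $u,v$ are adjacent iff they have a common out-neighbor in $D$. The competition number $k(G)$ is the smallest $k\ge 0$ such that $G$ together with $k$ new isolated vertices is the competition graph of some acyclic digraph. The phylogeny graph $P(D)$ of an acyclic digraph $D$ is the graph on $V(D)$ in which distinct vertices $u,v$ are adjacent iff $(u,v)\in A(D)$, or $(v,u)\in A(D)$, or they have a common out-neighbor in $D$. A phylogeny digraph for a graph $G$ is an acyclic digraph $D$ such that $G$ is an induced subgraph of $P(D)$ and $D$ has no arc from a vertex of $V(D)\setminus V(G)$ to a vertex of $V(G)$. The phylogeny number $p(G)$ is the minimum of $|V(D)\setminus V(G)|$ over all phylogeny digraphs $D$ for $G$. *)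

(* Simple graphs = symmetric irreflexive boolean relations on a finType. *)
From mathcomp Require Import all_boot.
Set Implicit Arguments. Unset Strict Implicit. Unset Printing Implicit Defensive.

Definition path_graph (n : nat) : rel 'I_n :=
  fun i j => (i.+1 == j :> nat) || (j.+1 == i :> nat).

Definition complete_graph (n : nat) : rel 'I_n := fun i j => i != j.

Definition cart_prod (T1 T2 : finType) (e1 : rel T1) (e2 : rel T2) : rel (T1 * T2) :=
  fun u v => ((u.1 == v.1) && e2 u.2 v.2) || ((u.2 == v.2) && e1 u.1 v.1).

(* Identification of vertex a of G1 with vertex b of G2.
   Vertex set: V(G2) + (V(G1) \ {a}); the identified vertex is represented by inl b. *)
Definition glue_vtx (T1 T2 : finType) (a : T1) : finType :=
  (T2 + {x : T1 | x != a})%type.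

Definition glue (T1 T2 : finType) (e1 : rel T1) (a : T1) (e2 : rel T2) (b : T2)
  : rel (@glue_vtx T1 T2 a) :=
  fun u v =>
    match u, v with
    | inl y, inl y' => e2 y y'
    | inr x, inr x' => e1 (val x) (val x')
    | inl y, inr x => (y == b) && e1 a (val x)
    | inr x, inl y => (y == b) && e1 (val x) a
    end.
Arguments glue {T1 T2} e1 a e2 b.

Definition acyclic (V : finType) (D : rel V) : Prop :=
  forall x y, D x y -> ~~ connect D y x.

Definition competition_graph (V : finType) (D : rel V) : rel V :=
  fun u v => (u != v) && [exists w, D u w && D v w].

Definition phylogeny_graph (V : finType) (D : rel V) : rel V :=
  fun u v => (u != v) && [|| D u v, D v u | [exists w, D u w && D v w]].

Definition add_isolated (T : finType) (e : rel T) (k : nat) : rel (T + 'I_k) :=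
  fun u v => match u, v with inl x, inl y => e x y | _, _ => false end.

Definition comp_ok (T : finType) (e : rel T) (k : nat) : Prop :=
  exists D : rel (T + 'I_k), acyclic D /\
    forall u v, competition_graph D u v = @add_isolated T e k u v.

Definition competition_number_is (T : finType) (e : rel T) (kk : nat) : Prop :=
  comp_ok e kk /\ forall k, comp_ok e k -> kk <= k.

(* a phylogeny digraph for G with exactly k vertices outside V(G)
   (vertex set V(G) + 'I_k, every finite digraph containing V(G) is of this form up to iso) *)
Definition phylo_ok (T : finType) (e : rel T) (k : nat) : Prop :=
  exists D : rel (T + 'I_k), acyclic D /\
    (forall x y : T, phylogeny_graph D (inl x) (inl y) = e x y) /\
    (forall (i : 'I_k) (x : T), ~~ D (inr i) (inl x)).

Definition phylogeny_number_is (T : finType) (e : rel T) (pp : nat) : Prop :=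
  phylo_ok e pp /\ forall k, phylo_ok e k -> pp <= k.

Definition G_l (l : nat) (a : 'I_(l + 2)) (b : 'I_(l + 1) * 'I_2) :=
  glue (@complete_graph (l + 2)) a (cart_prod (@path_graph (l + 1)) (@path_graph 2)) b.
Arguments G_l l a b : clear implicits.

(* A graph without isolated vertices has competition number at least 1: a sink
   of an acyclic digraph lying in V(G) has no prey, so it competes with nobody.
   For p(G_l) >= l, each of the 3l+1 edges of the ladder P_{l+1} x P_2 lies in
   no triangle.  In P(D) such an edge uv is realised by a vertex that is u, v or
   a prey of both, and the absence of triangles forces this vertex to determine
   the edge and to be either a new vertex or a ladder vertex other than a
   source of D restricted to the ladder.  Hence 3l+1 <= (2l+2-1) + p(G_l).
   The upper bounds k(G_l) <= 1 and p(G_l) <= l come from explicit digraphs. *)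

From mathcomp Require Import all_boot zify.
Set Implicit Arguments. Unset Strict Implicit. Unset Printing Implicit Defensive.

Section AcyclicDigraph.
Variables (V : finType) (D : rel V).
Hypothesis acD : acyclic D.

Let reach x := #|[pred z | connect D x z]|.

Lemma acyclic_reach_lt x y : D x y -> reach y < reach x.
Proof.
move=> Dxy; apply: proper_card; apply/properP; split.
  by apply/subsetP => z; rewrite !inE; apply: connect_trans (connect1 Dxy).
by exists x; rewrite !inE ?connect0 //; apply: acD.
Qed.

Lemma acyclic_sink (x0 : V) : exists x, forall y, ~~ D x y.
Proof.
case: (arg_minnP reach (isT : predT x0)) => x _ min_x; exists x => y.
by apply/negP => /acyclic_reach_lt; rewrite ltnNge min_x.
Qed.

Lemma acyclic_source_in (U : finType) (f : U -> V) (P : pred U) x0 :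
  P x0 -> exists2 w, P w & forall u, P u -> ~~ D (f u) (f w).
Proof.
move=> Px0; case: (arg_maxnP (reach \o f) Px0) => w Pw max_w; exists w => // u Pu.
by apply/negP => /acyclic_reach_lt; apply/negP; rewrite -leqNgt; apply: max_w.
Qed.

End AcyclicDigraph.

Lemma ranked_acyclic (V : finType) (D : rel V) (rank : V -> nat) :
  (forall x y, D x y -> rank x < rank y) -> acyclic D.
Proof.
move=> rankD x y Dxy; apply/negP => /connectP [p pth x_last].
suff : rank y <= rank (last y p) by rewrite -x_last; have := rankD _ _ Dxy; lia.
elim: p y pth {Dxy x_last} => //= z p IH y /andP [Dyz /IH]; have := rankD _ _ Dyz; lia.
Qed.

Lemma comp_ok_gt0 (T : finType) (e : rel T) (x0 : T) k :
  (forall x, exists y, e x y) -> comp_ok e k -> 0 < k.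
Proof.
case: k => // no_isolated [D [acD compD]].
have [[x|[]//] sink_x] := acyclic_sink acD (inl x0).
have [y exy] := no_isolated x; move: (compD (inl x) (inl y)).
rewrite /= exy => /andP [_ /existsP [w /andP [Dxw _]]].
by rewrite (negbTE (sink_x w)) in Dxw.
Qed.

Definition in_no_triangle (T : finType) (e : rel T) (u v : T) :=
  forall x, ~~ (e x u && e x v).

Section PhylogenyLowerBound.
Variables (T : finType) (e : rel T) (k : nat) (D : rel (T + 'I_k)).
Hypothesis phD : forall x y, phylogeny_graph D (inl x) (inl y) = e x y.

Definition self_or_prey (x : T) (c : T + 'I_k) := (inl x == c) || D (inl x) c.

Lemma adj_of_self_or_prey x y c :
  x != y -> self_or_prey x c -> self_or_prey y c -> e x y.
Proof.
move=> xy; rewrite -phD /phylogeny_graph /self_or_prey (inj_eq inl_inj) xy /=.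
case/orP=> [/eqP <- | Dxc]; case/orP=> [/eqP yc | Dyc].
- by move: yc xy => [->]; rewrite eqxx.
- by rewrite Dyc orbT.
- by rewrite yc Dxc.
by apply/or3P; constructor 3; apply/existsP; exists c; rewrite Dxc Dyc.
Qed.

(* An edge [uv] of [G] is realised in [P(D)] by an arc or by a common prey; in
   either case some vertex is [self_or_prey] of both [u] and [v]. *)
Definition edge_witness u v : T + 'I_k :=
  odflt (inl u) [pick c | self_or_prey u c && self_or_prey v c].

Lemma edge_witnessP u v :
  e u v -> self_or_prey u (edge_witness u v) && self_or_prey v (edge_witness u v).
Proof.
rewrite /edge_witness; case: pickP => [c -> // | none].
rewrite -phD /phylogeny_graph (inj_eq inl_inj) => /andP [_ /or3P [Duv|Dvu|]].
- by have := none (inl v); rewrite /self_or_prey Duv eqxx orbT.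
- by have := none (inl u); rewrite /self_or_prey Dvu eqxx orbT.
by case/existsP => c /andP [Duc Dvc]; have := none c; rewrite /self_or_prey Duc Dvc !orbT.
Qed.

Section TriangleFreeEdge.
Variables (u v : T).
Hypotheses (euv : e u v) (no_tri : in_no_triangle e u v).

Lemma edge_witness_only x : self_or_prey x (edge_witness u v) -> (x == u) || (x == v).
Proof.
case/andP: (edge_witnessP euv) => wu wv wx; apply/negPn/negP.
rewrite negb_or => /andP [xu xv].
by have := no_tri x; rewrite (adj_of_self_or_prey xu wx wu) (adj_of_self_or_prey xv wx wv).
Qed.

Lemma edge_witness_inl t :
  edge_witness u v = inl t -> exists2 x, (x == u) || (x == v) & D (inl x) (inl t).
Proof.
move=> wt; have : (t == u) || (t == v).
  by apply: edge_witness_only; rewrite wt /self_or_prey eqxx.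
have uv : u != v by move: euv; rewrite -phD => /andP [].
case/andP: (edge_witnessP euv); rewrite wt /self_or_prey !(inj_eq inl_inj).
move=> wu wv /orP [/eqP tu | /eqP tv]; subst t.
  case/orP: wv => [vu | Dvu]; first by rewrite eq_sym vu in uv.
  by exists v; rewrite ?eqxx ?orbT.
case/orP: wu => [uv' | Duv]; first by rewrite uv' in uv.
by exists u; rewrite ?eqxx.
Qed.

End TriangleFreeEdge.
End PhylogenyLowerBound.

Lemma phylo_ok_card_edges (T : finType) (e : rel T) (P : {set T}) k
    (I : finType) (E : I -> T * T) :
  0 < #|P| -> phylo_ok e k ->
  (forall i, e (E i).1 (E i).2) ->
  (forall i, in_no_triangle e (E i).1 (E i).2) ->
  (forall i, ((E i).1 \in P) && ((E i).2 \in P)) ->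
  (forall i j, E j = E i \/ E j = ((E i).2, (E i).1) -> i = j) ->
  #|I| < #|P| + k.
Proof.
move=> /card_gt0P [x0 Px0] [D [acD [phD _]]] eE noT EP Einj.
have [w Pw src_w] := acyclic_source_in (P := [in P]) acD (@inl T 'I_k) Px0.
pose W i := edge_witness D (E i).1 (E i).2.
have W_end i x : self_or_prey D x (W i) -> (x == (E i).1) || (x == (E i).2).
  exact: (edge_witness_only phD (eE i) (noT i)).
have W_inj : injective W.
  move=> i j Wij; apply: Einj.
  case/andP: (edge_witnessP phD (eE i)); rewrite -/(W i) Wij.
  have : (E i).1 != (E i).2.
    by move: (eE i); rewrite -phD /phylogeny_graph (inj_eq inl_inj) => /andP [].
  move=> + /W_end + /W_end; case: (E i) => u v; case: (E j) => u' v' /= uv.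
  by do 2!case/orP=> /eqP ?; subst; rewrite ?eqxx // in uv *; [left | right].
have W_sub : W @: setT \subset inl @: (P :\ w) :|: inr @: setT.
  apply/subsetP => _ /imsetP [i _ ->]; rewrite inE; case Wi: (W i) => [t|z].
    have /W_end t_end : self_or_prey D t (W i) by rewrite Wi /self_or_prey eqxx.
    have [x x_end Dxt] := edge_witness_inl phD (eE i) (noT i) Wi.
    have Pend y : (y == (E i).1) || (y == (E i).2) -> y \in P.
      by case/andP: (EP i) => P1 P2 /orP [] /eqP ->.
    rewrite imset_f // !inE Pend // andbT; apply: contraTneq Dxt => ->.
    exact: src_w (Pend _ x_end).
  by rewrite imset_f ?orbT.
rewrite -cardsT -(card_imset _ W_inj).
apply: leq_ltn_trans (subset_leq_card W_sub) _.
apply: leq_ltn_trans (leq_card_setU _ _).1 _.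
rewrite !card_imset; try exact: inl_inj; try exact: inr_inj.
by rewrite cardsT card_ord (cardsD1 w P) Pw.
Qed.

Section GluedGraph.
Variables (l : nat) (a : 'I_(l + 2)) (b : 'I_(l + 1) * 'I_2).

Local Notation grid := ('I_(l + 1) * 'I_2)%type.
Local Notation clique := {x : 'I_(l + 2) | x != a}.
Local Notation V := (glue_vtx grid a).
Local Notation G := (G_l l a b).

Lemma grid_eqE (v w : grid) : (v == w) = (v.1 == w.1 :> nat) && (v.2 == w.2 :> nat).
Proof. by []. Qed.

Lemma clique_eqE (x y : clique) : (x == y) = (val x == val y :> nat).
Proof. by []. Qed.

Lemma G_l_grid (i i' : 'I_(l + 1)) (j j' : 'I_2) :
  G (inl (i, j)) (inl (i', j')) =
  ((i == i' :> nat) && ((j.+1 == j' :> nat) || (j'.+1 == j :> nat)))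
  || ((j == j' :> nat) && ((i.+1 == i' :> nat) || (i'.+1 == i :> nat))).
Proof. by []. Qed.

Lemma G_l_grid_clique (v : grid) (x : clique) : G (inl v) (inr x) = (v == b).
Proof. by case: x => x xa; rewrite /G_l /= /complete_graph [a == x]eq_sym xa andbT. Qed.

Lemma G_l_clique_grid (x : clique) (v : grid) : G (inr x) (inl v) = (v == b).
Proof. by case: x => x xa; rewrite /G_l /= /complete_graph xa andbT. Qed.

Lemma G_l_clique (x y : clique) : G (inr x) (inr y) = (val x != val y :> nat).
Proof. by []. Qed.

Definition clique_rank (x : clique) : nat := unbump a (val x).

Lemma clique_rank_le x : clique_rank x <= l.
Proof.
case: x => x xa; rewrite /clique_rank /unbump /=.
have := ltn_ord x; have := ltn_ord a; move: xa; rewrite -val_eqE /=; lia.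
Qed.

Lemma bump_ltn r : r <= l -> bump a r < l + 2.
Proof. rewrite /bump; have := ltn_ord a; lia. Qed.

Lemma bump_neq r (r_le : r <= l) : Ordinal (bump_ltn r_le) != a.
Proof. by rewrite -val_eqE /= eq_sym neq_bump. Qed.

Definition clique_of_rank r (r_le : r <= l) : clique :=
  exist _ (Ordinal (bump_ltn r_le)) (bump_neq r_le).

Lemma clique_of_rankK r (r_le : r <= l) : clique_rank (clique_of_rank r_le) = r.
Proof. exact: bumpK. Qed.

Ltac add_bounds := repeat match goal with
  | x : _ |- _ => lazymatch goal with
      | _ : is_true (nat_of_ord x < _) |- _ => fail
      | _ => have := ltn_ord x; move=> ? end
  | |- context [clique_rank ?x] => lazymatch goal with
      | _ : is_true (clique_rank x <= _) |- _ => fail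
      | _ => have := clique_rank_le x; move=> ? end
  end.

(* Every edge of [G] gets a prey of its own: rung [i < l] the vertex [(i+1,0)],
   bottom edge [(i,0)(i+1,0)] the vertex [(i+1,1)], top edge [(i,1)(i+1,1)]
   the clique vertex of rank [i], rung [l] the clique vertex of rank [l];
   the clique together with [b] preys on the single new vertex. *)
Definition comp_digraph : rel (V + 'I_1) := fun p q =>
  match p, q with
  | inl (inl (i, j)), inl (inl (i', j')) =>
      if j' == 0 :> nat then i.+1 == i' :> nat
      else (j == 0 :> nat) && ((i == i' :> nat) || (i.+1 == i' :> nat))
  | inl (inl (i, j)), inl (inr x) =>
      ((i == clique_rank x :> nat) && ((j == 1 :> nat) || (clique_rank x == l)))
      || ((j == 1 :> nat) && (i == (clique_rank x).+1 :> nat))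
  | inl (inl v), inr _ => v == b
  | inl (inr _), inr _ => true
  | _, _ => false
  end.

Lemma comp_digraph_acyclic : acyclic comp_digraph.
Proof.
apply: (@ranked_acyclic _ _ (fun p : V + 'I_1 => match p with
  | inl (inl (i, j)) => 2 * i + j | inl (inr _) => 2 * l + 2 | inr _ => 2 * l + 3 end)).
move=> [[[i j]|x]|z] [[[i' j']|y]|z'] //=; add_bounds; try case: ifP; lia.
Qed.

Lemma comp_digraph_common_prey u v :
  (u != v) && [exists w, comp_digraph (inl u) w && comp_digraph (inl v) w] = G u v.
Proof.
apply/idP/idP.
  case/andP=> + /existsP [w /andP []].
  case: u => [[i j]|x]; case: v => [[i' j']|y]; case: w => [[[i'' j'']|z]|z] //;
    rewrite ?G_l_grid ?G_l_grid_clique ?G_l_clique_grid ?G_l_clique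
            /= ?(inj_eq inl_inj) ?(inj_eq inr_inj) ?grid_eqE ?clique_eqE -?val_eqE /=;
    add_bounds; try case: ifP; lia.
move=> Guv; apply/andP; split.
  by apply: contraTneq Guv => ->; case: v => [[i j]|x]; rewrite ?G_l_grid ?G_l_clique; lia.
apply/existsP; move: Guv.
case: u => [[i j]|x]; case: v => [[i' j']|y];
  rewrite ?G_l_grid ?G_l_grid_clique ?G_l_clique_grid ?G_l_clique => Guv;
  try by exists (inr ord0); rewrite /= ?Guv ?andbT // eq_sym.
add_bounds; have [ii'|ii'] := eqVneq (i : nat) i'.
- have [i_lt|i_ge] := ltnP i l.
    have h : i.+1 < l + 1 by lia.
    by exists (inl (inl (Ordinal h, ord0))) => /=; lia.
  have h : l <= l by [].
  by exists (inl (inr (clique_of_rank h))); rewrite /= clique_of_rankK; lia.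
- have m_le : minn i i' <= l by lia.
  have [j0|j1] := eqVneq (j : nat) 0.
    have h : (minn i i').+1 < l + 1 by lia.
    by exists (inl (inl (Ordinal h, @Ordinal 2 1 isT))) => /=; lia.
  by exists (inl (inr (clique_of_rank m_le))); rewrite /= clique_of_rankK; lia.
Qed.

Lemma comp_ok_G_l : comp_ok G 1.
Proof.
exists comp_digraph; split; first exact: comp_digraph_acyclic.
case=> [u|z] [v|z']; first exact: comp_digraph_common_prey.
all: apply/negbTE; rewrite negb_and; apply/orP; right; apply/existsPn.
all: by move=> [[[? ?]|?]|?]; rewrite /= ?andbF.
Qed.

Lemma G_l_no_isolated u : exists v, G u v.
Proof.
case: u => [[i j]|x]; last by exists (inl b); rewrite G_l_clique_grid.
have h : 1 - j < 2 by lia.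
by exists (inl (i, Ordinal h)); rewrite G_l_grid /=; add_bounds; lia.
Qed.

(* Arcs realise the bottom row, the rungs, the clique (ordered by value) and
   the edges from [b] to the clique; only the [l] top edges need new prey. *)
Definition phylo_digraph : rel (V + 'I_l) := fun p q =>
  match p, q with
  | inl (inl (i, j)), inl (inl (i', j')) =>
      (j == 0 :> nat) && (((j' == 0 :> nat) && (i' == i.+1 :> nat))
                          || ((j' == 1 :> nat) && (i' == i :> nat)))
  | inl (inl v), inl (inr _) => v == b
  | inl (inr x), inl (inr y) => val x < val y
  | inl (inl (i, j)), inr m => (j == 1 :> nat) && ((i == m :> nat) || (i == m.+1 :> nat))
  | _, _ => false
  end.

Lemma phylo_digraph_acyclic : acyclic phylo_digraph.
Proof.
apply: (@ranked_acyclic _ _ (fun p : V + 'I_l => match p with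
  | inl (inl (i, j)) => 2 * i + j | inl (inr x) => 2 * l + 2 + val x
  | inr _ => 4 * l + 6 end)).
by move=> [[[i j]|x]|z] [[[i' j']|y]|z'] //=; add_bounds; lia.
Qed.

Lemma phylogeny_phylo_digraph u v :
  phylogeny_graph phylo_digraph (inl u) (inl v) = G u v.
Proof.
rewrite /phylogeny_graph (inj_eq inl_inj); apply/idP/idP.
  case/andP=> + /or3P [| | /existsP [w /andP []]];
  case: u => [[i j]|x]; case: v => [[i' j']|y]; try case: w => [[[i'' j'']|z]|z];
    rewrite ?G_l_grid ?G_l_grid_clique ?G_l_clique_grid ?G_l_clique
            /= ?(inj_eq inl_inj) ?(inj_eq inr_inj) ?grid_eqE ?clique_eqE -?val_eqE /=;
    add_bounds; lia.
move=> Guv; apply/andP; split.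
  by apply: contraTneq Guv => ->; case: v => [[i j]|x]; rewrite ?G_l_grid ?G_l_clique; lia.
move: Guv; case: u => [[i j]|x]; case: v => [[i' j']|y];
  rewrite ?G_l_grid ?G_l_grid_clique ?G_l_clique_grid ?G_l_clique /= => Guv.
- have [top_edge|not_top] := boolP [&& (j == 1 :> nat), (j' == 1 :> nat) & (i != i' :> nat)].
    add_bounds; have m_lt : minn i i' < l by lia.
    by apply/or3P; constructor 3; apply/existsP; exists (inr (Ordinal m_lt)) => /=; lia.
  by rewrite orbA; apply/orP; left; add_bounds; lia.
- by rewrite Guv.
- by rewrite Guv.
- by rewrite orbA; apply/orP; left; rewrite -neq_ltn.
Qed.

Lemma phylo_ok_G_l : phylo_ok G l.
Proof.
exists phylo_digraph; split; first exact: phylo_digraph_acyclic.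
by split; [exact: phylogeny_phylo_digraph | move=> m [[? ?]|?]].
Qed.

Lemma ord_succ_lt (i : 'I_l) : i.+1 < l + 1.
Proof. by rewrite addn1 ltnS. Qed.

Definition grid_edge (e : 'I_l * 'I_2 + 'I_(l + 1)) : V * V :=
  match e with
  | inl (i, j) => (inl (widen_ord (leq_addr 1 l) i, j), inl (Ordinal (ord_succ_lt i), j))
  | inr i => (inl (i, ord0), inl (i, ord_max))
  end.

Definition grid_coord (v : V) : nat * nat :=
  if v is inl (i, j) then (nat_of_ord i, nat_of_ord j) else (0, 0).

Lemma grid_edge_inj e f :
  grid_edge f = grid_edge e \/ grid_edge f = ((grid_edge e).2, (grid_edge e).1) -> e = f.
Proof.
case=> /(congr1 (fun p => (grid_coord p.1, grid_coord p.2))).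
all: case: e => [[i j]|i]; case: f => [[i' j']|i'] /= [] *; apply/eqP.
all: rewrite ?(inj_eq inl_inj) ?(inj_eq inr_inj) ?xpair_eqE -?val_eqE /=; add_bounds; lia.
Qed.

Lemma phylo_ok_G_l_ge k : phylo_ok G k -> l <= k.
Proof.
move=> phk; pose P : {set V} := inl @: [set: grid].
have P_card : #|P| = (l + 1) * 2.
  by rewrite card_imset ?cardsT ?card_prod ?card_ord //; apply: inl_inj.
have edge e : G (grid_edge e).1 (grid_edge e).2.
  by case: e => [[i j]|i]; rewrite G_l_grid /=; lia.
have no_triangle e : in_no_triangle G (grid_edge e).1 (grid_edge e).2.
  case: e => [[i j]|i] [[i' j']|x];
    rewrite ?G_l_grid ?G_l_clique_grid ?grid_eqE /=; add_bounds; lia.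
have in_P e : ((grid_edge e).1 \in P) && ((grid_edge e).2 \in P).
  by case: e => [[i j]|i]; rewrite /P /= !imset_f.
have := phylo_ok_card_edges _ phk edge no_triangle in_P grid_edge_inj.
by rewrite P_card card_sum card_prod !card_ord; lia.
Qed.
End GluedGraph.

Theorem mainTheorem12 (l : nat) (hl : 0 < l)
  (a : 'I_(l + 2)) (b : 'I_(l + 1) * 'I_2) :
  competition_number_is (G_l l a b) 1 /\ phylogeny_number_is (G_l l a b) l.
Proof.
split; split.
- exact: comp_ok_G_l.
- by move=> k; exact: (comp_ok_gt0 (inl b) (@G_l_no_isolated l a b)).
- exact: phylo_ok_G_l.
- exact: phylo_ok_G_l_ge.
Qed.
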